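(* Let $s\in(0,1)$, $0<\iota<\min\{s,1/3\}$, let $\omega$ satisfy condition (M) with parameter $\iota$, and let $C>0$. Then there exist $t_0>0$ and a function $\zeta:[0,\infty)\to[0,\infty)$ with $\zeta\in C([0,\infty))\cap C^2((0,\infty))\cap C^3((0,2))$ satisfying (Z0), (Z1), (Z2), (Z3), (Z4) and $$C\big(t^s+\omega(t)\big)\le t\zeta'(t)\quad\text{for all }0<t<t_0.$$
   Context: Condition (M) with parameter $\iota$: $\omega:[0,\infty)\to[0,\infty)$ is continuous, increasing and concave, $C^2$ on $(0,\infty)$, $\omega(0)=0$, $\int_0^1\omega(t)/t\,dt<\infty$, and there is $t_0>0$ with $\omega(t)/t^\iota$ decreasing on $(0,t_0)$ and $t^2\omega''(t)\ge-\omega(t)-3t\omega'(t)$ on $(0,t_0)$. (Z0): $\zeta$ positive on $(0,\infty)$, increasing, concave, $\zeta(0)=0$. (Z1): there are $c_1>0$, $t_0\in(0,1)$ with $t^2\zeta'''(t)\ge-c_1\zeta'(t)$ for $0<t<t_0$. (Z2): $t\mapsto t\zeta'(t)$ nondecreasing on $(0,\infty)$. (Z3): there are $\iota>0$, $t_0>0$ such that $\zeta(t)/t^\iota$ is decreasing on $(0,t_0]$. (Z4): there is $c_2>0$ with $\zeta(t)\le c_2(1+t)^{s/2}$ for $t\ge0$. *)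

From Stdlib Require Import Reals.
From Coquelicot Require Import Coquelicot.
Open Scope R_scope.

Definition cont_on_nonneg (f : R -> R) : Prop :=
  forall x, 0 <= x ->
    filterlim f (within (fun y => 0 <= y) (locally x)) (locally (f x)).

Definition Cn_on (n : nat) (D : R -> Prop) (f : R -> R) : Prop :=
  forall x, D x ->
    (forall k, (k <= n)%nat -> ex_derive_n f k x) /\
    continuous (Derive_n f n) x.

Definition incr_on_nonneg (f : R -> R) : Prop :=
  forall x y, 0 <= x -> x < y -> f x < f y.

Definition concave_on_nonneg (f : R -> R) : Prop :=
  forall x y l, 0 <= x -> 0 <= y -> 0 <= l <= 1 ->
    l * f x + (1 - l) * f y <= f (l * x + (1 - l) * y).

Definition condM (iota : R) (omega : R -> R) : Prop :=
  (forall t, 0 <= t -> 0 <= omega t) /\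
  cont_on_nonneg omega /\
  incr_on_nonneg omega /\
  concave_on_nonneg omega /\
  Cn_on 2 (fun t => 0 < t) omega /\
  omega 0 = 0 /\
  ex_RInt_gen (fun t => omega t / t) (at_right 0) (at_point 1) /\
  (exists t0, 0 < t0 /\
     (forall x y, 0 < x -> x < y -> y < t0 ->
        omega y / Rpower y iota < omega x / Rpower x iota) /\
     (forall t, 0 < t < t0 ->
        t ^ 2 * Derive_n omega 2 t >= - omega t - 3 * t * Derive omega t)).

Definition condZ0 (zeta : R -> R) : Prop :=
  (forall t, 0 < t -> 0 < zeta t) /\
  incr_on_nonneg zeta /\ concave_on_nonneg zeta /\ zeta 0 = 0.

Definition condZ1 (zeta : R -> R) : Prop :=
  exists c1 t0, 0 < c1 /\ 0 < t0 < 1 /\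
    forall t, 0 < t < t0 -> t ^ 2 * Derive_n zeta 3 t >= - c1 * Derive zeta t.

Definition condZ2 (zeta : R -> R) : Prop :=
  forall x y, 0 < x -> x <= y -> x * Derive zeta x <= y * Derive zeta y.

Definition condZ3 (zeta : R -> R) : Prop :=
  exists iota t0, 0 < iota /\ 0 < t0 /\
    forall x y, 0 < x -> x < y -> y <= t0 ->
      zeta y / Rpower y iota < zeta x / Rpower x iota.

Definition condZ4 (s : R) (zeta : R -> R) : Prop :=
  exists c2, 0 < c2 /\ forall t, 0 <= t -> zeta t <= c2 * Rpower (1 + t) (s / 2).

From Stdlib Require Import Reals Lra Lia.
From Coquelicot Require Import Coquelicot.
Open Scope R_scope.

(* The majorant is [zeta t = B * int_0^t omega (shrink r) / r dr + ln (1 + t)]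
   with [shrink t = t / (2 (1 + t))].  Its derivative
   [B omega (shrink t) / t + 1 / (1 + t)] is positive and decreasing because
   omega is concave through the origin, so zeta is increasing and concave, and
   [t zeta'(t) = B omega (shrink t) + t / (1 + t)] is nondecreasing.  On [0,1]
   we have [shrink t >= t / 4], hence [t zeta'(t) >= B omega(t) / 4], and near
   0 the decay of [omega t / t^iota] gives [omega t >= m t^iota >= m t^s]; so a
   large B yields the required lower bound.  Since [shrink < 1/2], zeta grows
   only logarithmically, which gives (Z4), and the third derivative of zeta is
   controlled by the second-order inequality in (M), which gives (Z1). *)


Lemma locally_pos (t : R) : 0 < t -> locally t (fun y => 0 < y).
Proof. intros Ht. apply (locally_interval _ t 0 p_infty); [exact Ht | exact I | auto]. Qed.

Lemma is_derive_continuous (f : R -> R) (x l : R) : is_derive f x l -> continuous f x.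
Proof. intros H. apply (@ex_derive_continuous R_AbsRing R_NormedModule). now exists l. Qed.

Lemma is_derive_continuity_pt (f : R -> R) (x l : R) : is_derive f x l -> continuity_pt f x.
Proof. intros H. apply continuity_pt_filterlim, (is_derive_continuous f x l H). Qed.

Lemma cont_on_nonneg_of_continuity_pt (f : R -> R) :
  (forall x, 0 <= x -> continuity_pt f x) -> cont_on_nonneg f.
Proof.
  intros Hf x Hx. unfold filterlim, filter_le, filtermap, within. intros P HP.
  apply (filter_imp (fun y => P (f y))); [now intros y Hy _|].
  exact (proj1 (continuity_pt_filterlim f x) (Hf x Hx) P HP).
Qed.

Lemma MVT_interior (f df : R -> R) (a b : R) : a < b ->
  (forall x, a < x < b -> is_derive f x (df x)) ->
  (forall x, a <= x <= b -> continuity_pt f x) ->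
  exists c, a < c < b /\ f b - f a = df c * (b - a).
Proof.
  intros Hab Hd Hc.
  assert (pr : forall c, a < c < b -> derivable_pt f c)
    by (intros c Hc'; exists (df c); apply is_derive_Reals, Hd, Hc').
  destruct (MVT f id a b pr (fun c _ => derivable_pt_id c) Hab Hc
              (fun c _ => derivable_continuous_pt _ _ (derivable_pt_id c)))
    as [c [Hc' E]].
  exists c; split; [exact Hc'|].
  rewrite (derive_pt_eq_0 f c (df c) (pr c Hc')) in E
    by apply is_derive_Reals, Hd, Hc'.
  rewrite (derive_pt_eq_0 id c 1 (derivable_pt_id c)) in E by apply derivable_pt_lim_id.
  unfold id in E; lra.
Qed.

Lemma lt_of_derive_pos (f df : R -> R) (a b : R) : a < b ->
  (forall x, a < x < b -> is_derive f x (df x)) ->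
  (forall x, a < x < b -> 0 < df x) ->
  (forall x, a <= x <= b -> continuity_pt f x) -> f a < f b.
Proof.
  intros Hab Hd Hp Hc. destruct (MVT_interior f df a b Hab Hd Hc) as [c [Hc' E]].
  specialize (Hp c Hc'). nra.
Qed.

Lemma increment_le_of_derive_le (f g df dg : R -> R) (a b : R) : a < b ->
  (forall x, a < x < b -> is_derive f x (df x)) ->
  (forall x, a < x < b -> is_derive g x (dg x)) ->
  (forall x, a < x < b -> df x <= dg x) ->
  (forall x, a <= x <= b -> continuity_pt f x) ->
  (forall x, a <= x <= b -> continuity_pt g x) ->
  f b - f a <= g b - g a.
Proof.
  intros Hab Hf Hg Hle Hcf Hcg.
  destruct (MVT_interior (fun x => g x - f x) (fun x => dg x - df x) a b Hab)
    as [c [Hc E]].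
  - intros x Hx. apply (is_derive_minus g f); auto.
  - intros x Hx. apply continuity_pt_minus; auto.
  - specialize (Hle c Hc). nra.
Qed.

Lemma strict_concave_of_derive_decr (f df : R -> R) :
  (forall x, 0 < x -> is_derive f x (df x)) ->
  (forall x y, 0 < x -> x < y -> df y < df x) ->
  (forall x, 0 <= x -> continuity_pt f x) ->
  forall x y l, 0 <= x -> x < y -> 0 < l < 1 ->
  l * f x + (1 - l) * f y < f (l * x + (1 - l) * y).
Proof.
  intros Hd Hdec Hc x y l Hx Hxy Hl.
  set (z := l * x + (1 - l) * y).
  assert (Hz : x < z < y) by (unfold z; nra).
  destruct (MVT_interior f df x z) as [c1 [Hc1 E1]];
    [lra | intros u Hu; apply Hd; lra | intros u Hu; apply Hc; lra |].
  destruct (MVT_interior f df z y) as [c2 [Hc2 E2]];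
    [lra | intros u Hu; apply Hd; lra | intros u Hu; apply Hc; lra |].
  assert (Hlt : df c2 < df c1) by (apply Hdec; lra).
  replace (z - x) with ((1 - l) * (y - x)) in E1 by (unfold z; ring).
  replace (y - z) with (l * (y - x)) in E2 by (unfold z; ring).
  assert (0 < l * (1 - l) * (y - x)) by (apply Rmult_lt_0_compat; nra).
  nra.
Qed.

Lemma is_derive_ge (f : R -> R) (y l m d0 : R) : is_derive f y l -> 0 < d0 ->
  (forall h, 0 < h < d0 -> m <= (f (y + h) - f y) / h) -> m <= l.
Proof.
  intros Hd Hd0 H. apply is_derive_Reals in Hd.
  destruct (Rle_or_lt m l) as [|Hlt]; [assumption|].
  destruct (Hd ((m - l) / 2)) as [[del Hdel0] Hdel]; [lra|]; simpl in Hdel.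
  pose proof (Rmin_l (del / 2) (d0 / 2)); pose proof (Rmin_r (del / 2) (d0 / 2)).
  set (h := Rmin (del / 2) (d0 / 2)) in *.
  assert (Hh : 0 < h) by (apply Rmin_pos; lra).
  specialize (Hdel h (Rgt_not_eq _ _ Hh) ltac:(rewrite Rabs_right by lra; lra)).
  specialize (H h ltac:(lra)). apply Rabs_lt_between' in Hdel. lra.
Qed.

Lemma is_derive_le (f : R -> R) (y l M d0 : R) : is_derive f y l -> 0 < d0 ->
  (forall h, 0 < h < d0 -> (f y - f (y - h)) / h <= M) -> l <= M.
Proof.
  intros Hd Hd0 H. apply is_derive_Reals in Hd.
  destruct (Rle_or_lt l M) as [|Hlt]; [assumption|].
  destruct (Hd ((l - M) / 2)) as [[del Hdel0] Hdel]; [lra|]; simpl in Hdel.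
  pose proof (Rmin_l (del / 2) (d0 / 2)); pose proof (Rmin_r (del / 2) (d0 / 2)).
  set (h := Rmin (del / 2) (d0 / 2)) in *.
  assert (Hh : 0 < h) by (apply Rmin_pos; lra).
  specialize (Hdel (- h) ltac:(lra) ltac:(rewrite Rabs_Ropp, Rabs_right by lra; lra)).
  specialize (H h ltac:(lra)).
  replace ((f (y + - h) - f y) / - h) with ((f y - f (y - h)) / h) in Hdel
    by (unfold Rminus; field; lra).
  apply Rabs_lt_between' in Hdel. lra.
Qed.

Lemma ln_le_Rpower_div (a x : R) : 0 < a -> 1 <= x -> ln x <= Rpower x a / a.
Proof.
  intros Ha Hx. assert (0 <= ln x) by (rewrite <- ln_1; apply ln_le; lra).
  pose proof (exp_ineq1_le (a * ln x)).
  apply Rmult_le_reg_l with a; [exact Ha|].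
  replace (a * (Rpower x a / a)) with (exp (a * ln x)) by (unfold Rpower; field; lra).
  lra.
Qed.

Lemma Rpower_le_of_exponent_ge (t a b : R) : 0 < t < 1 -> a <= b -> Rpower t b <= Rpower t a.
Proof.
  intros Ht Hab. unfold Rpower.
  assert (ln t < 0) by (rewrite <- ln_1; apply ln_increasing; lra).
  destruct (Req_dec a b) as [->|]; [lra|]. left. apply exp_increasing. nra.
Qed.

Lemma Cn_on_pred (n : nat) (D : R -> Prop) (f : R -> R) :
  Cn_on (S n) D f -> Cn_on n D f.
Proof.
  intros H x Hx. destruct (H x Hx) as [Hex _]. split.
  - intros k Hk. apply Hex. lia.
  - destruct (Hex (S n) (le_n _)) as [l Hl]. exact (is_derive_continuous _ x l Hl).
Qed.

Lemma Cn_on_sub (n : nat) (D D' : R -> Prop) (f : R -> R) :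
  (forall x, D' x -> D x) -> Cn_on n D f -> Cn_on n D' f.
Proof. intros HD H x Hx. exact (H x (HD x Hx)). Qed.

Lemma is_derive_Derive_n (f g : R -> R) (n : nat) (t l : R) :
  (forall y, 0 < y -> Derive_n f n y = g y) -> 0 < t -> is_derive g t l ->
  is_derive (Derive_n f n) t l.
Proof.
  intros Hfg Ht Hg. apply (is_derive_ext_loc g); [|exact Hg].
  apply (filter_imp (fun y => 0 < y)); [intros y Hy; symmetry; auto | apply locally_pos, Ht].
Qed.

Section Construction.
Variables (iota : R) (omega : R -> R).
Hypothesis Hom : condM iota omega.

Lemma omega0 : omega 0 = 0.
Proof. destruct Hom as (_&_&_&_&_&H&_); exact H. Qed.

Lemma omega_ge0 t : 0 <= t -> 0 <= omega t.
Proof. destruct Hom as (H&_); auto. Qed.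

Lemma omega_lt x y : 0 <= x -> x < y -> omega x < omega y.
Proof. destruct Hom as (_&_&H&_); auto. Qed.

Lemma omega_le x y : 0 <= x -> x <= y -> omega x <= omega y.
Proof. intros Hx [Hxy| ->]; [left; apply omega_lt|]; lra. Qed.

Lemma omega_scale l u : 0 <= l <= 1 -> 0 <= u -> l * omega u <= omega (l * u).
Proof.
  intros Hl Hu. destruct Hom as (_&_&_&Hc&_).
  pose proof (Hc u 0 l Hu (Rle_refl 0) Hl) as H. rewrite omega0 in H.
  replace (l * u + (1 - l) * 0) with (l * u) in H by ring. lra.
Qed.

Lemma omega_ratio_le x y : 0 < x -> x <= y -> omega y / y <= omega x / x.
Proof.
  intros Hx Hxy. pose proof (omega_scale (x / y) y) as H.
  replace (x / y * y) with x in H by (field; lra).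
  assert (Hl : 0 <= x / y <= 1).
  { split; [apply Rdiv_le_0_compat; lra|].
    apply Rmult_le_reg_r with y; [lra|]. replace (x / y * y) with x by (field; lra). lra. }
  specialize (H Hl ltac:(lra)).
  apply Rmult_le_reg_r with x; [exact Hx|].
  replace (omega x / x * x) with (omega x) by (field; lra).
  replace (omega y / y * x) with (x / y * omega y) by (field; lra). exact H.
Qed.

Lemma omega_is_derive y : 0 < y -> is_derive omega y (Derive omega y).
Proof.
  intros Hy. destruct Hom as (_&_&_&_&HC&_).
  apply Derive_correct, (proj1 (HC y Hy) 1%nat); lia.
Qed.

Lemma Domega_is_derive y : 0 < y -> is_derive (Derive omega) y (Derive (Derive omega) y).
Proof.
  intros Hy. destruct Hom as (_&_&_&_&HC&_).
  apply Derive_correct, (proj1 (HC y Hy) 2%nat); lia.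
Qed.

Lemma D2omega_continuous y : 0 < y -> continuous (Derive (Derive omega)) y.
Proof. intros Hy. destruct Hom as (_&_&_&_&HC&_). exact (proj2 (HC y Hy)). Qed.

Lemma Domega_ge0 y : 0 < y -> 0 <= Derive omega y.
Proof.
  intros Hy. apply (is_derive_ge omega y _ 0 1 (omega_is_derive y Hy)); [lra|].
  intros h Hh. pose proof (omega_lt y (y + h) ltac:(lra) ltac:(lra)).
  apply Rdiv_le_0_compat; lra.
Qed.

Lemma mul_Domega_le y : 0 < y -> y * Derive omega y <= omega y.
Proof.
  intros Hy. cut (Derive omega y <= omega y / y).
  { intros H. apply Rmult_le_compat_l with (r := y) in H; [|lra].
    replace (y * (omega y / y)) with (omega y) in H by (field; lra). exact H. }
  apply (is_derive_le omega y _ _ y (omega_is_derive y Hy)); [exact Hy|].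
  intros h Hh. pose proof (omega_ratio_le (y - h) y ltac:(lra) ltac:(lra)) as H.
  apply Rmult_le_reg_r with (h * y); [nra|].
  replace ((omega y - omega (y - h)) / h * (h * y)) with ((omega y - omega (y - h)) * y)
    by (field; lra).
  replace (omega y / y * (h * y)) with (omega y * h) by (field; lra).
  apply Rmult_le_compat_r with (r := y * (y - h)) in H; [|nra].
  replace (omega y / y * (y * (y - h))) with (omega y * (y - h)) in H by (field; lra).
  replace (omega (y - h) / (y - h) * (y * (y - h))) with (omega (y - h) * y) in H
    by (field; lra).
  nra.
Qed.

(* [omega] is only meaningful on [0,oo); composing with [Rabs] makes it
   continuous on all of R, so that integrals starting at 0 can be
   differentiated at 0. *)
Lemma omega_abs_continuous u : continuous (fun u => omega (Rabs u)) u.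
Proof.
  destruct (Req_dec u 0) as [->|Hu].
  - destruct Hom as (_&Hc&_). specialize (Hc 0 (Rle_refl 0)).
    intros P HP. rewrite Rabs_R0 in HP. destruct (Hc P HP) as [eps He].
    exists eps. intros y Hy. apply He; [|apply Rabs_pos].
    change (Rabs (Rabs y - 0) < eps). change (Rabs (y - 0) < eps) in Hy.
    rewrite Rminus_0_r, Rabs_Rabsolu in *. exact Hy.
  - apply (continuous_comp Rabs omega); [apply continuous_Rabs|].
    apply (is_derive_continuous _ _ _ (omega_is_derive _ (Rabs_pos_lt _ Hu))).
Qed.

Lemma omega_ge_power_near0 :
  exists m t1, 0 < m /\ 0 < t1 /\
    forall t, 0 < t < t1 -> m * Rpower t iota < omega t.
Proof.
  destruct Hom as (_&_&_&_&_&_&_&t0&Ht0&Hdec&_).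
  assert (Hpow : forall x, 0 < Rpower x iota) by (intros; apply exp_pos).
  exists (omega (t0 / 2) / Rpower (t0 / 2) iota), (t0 / 2).
  split; [apply Rdiv_lt_0_compat; [rewrite <- omega0; apply omega_lt |]; auto; lra|].
  split; [lra|]. intros t Ht.
  specialize (Hdec t (t0 / 2) ltac:(lra) ltac:(lra) ltac:(lra)).
  apply Rmult_lt_compat_r with (r := Rpower t iota) in Hdec; [|apply Hpow].
  replace (omega t / Rpower t iota * Rpower t iota) with (omega t) in Hdec
    by (field; apply Rgt_not_eq, Hpow).
  exact Hdec.
Qed.

Definition shrink (t : R) : R := t / (2 * (1 + t)).

Lemma shrink_bounds t : 0 < t -> 0 < shrink t < 1 / 2.
Proof.
  intros Ht. unfold shrink. split; [apply Rdiv_lt_0_compat; lra|].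
  apply Rmult_lt_reg_r with (2 * (1 + t)); [lra|].
  unfold Rdiv. rewrite Rmult_assoc, Rinv_l by lra. lra.
Qed.

Lemma shrink_le x y : 0 < x -> x <= y -> shrink x <= shrink y.
Proof.
  intros Hx Hxy. unfold shrink.
  apply Rmult_le_reg_r with (2 * (1 + x) * (2 * (1 + y))); [nra|].
  replace (x / (2 * (1 + x)) * (2 * (1 + x) * (2 * (1 + y)))) with (x * (2 * (1 + y)))
    by (field; lra).
  replace (y / (2 * (1 + y)) * (2 * (1 + x) * (2 * (1 + y)))) with (y * (2 * (1 + x)))
    by (field; lra).
  nra.
Qed.

Lemma shrink_is_derive t : 0 < t -> is_derive shrink t (/ (2 * (1 + t) ^ 2)).
Proof. intros Ht. unfold shrink. auto_derive; [lra | field; lra]. Qed.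

Lemma omega_le_4_omega_shrink t : 0 <= t <= 1 -> omega t <= 4 * omega (shrink t).
Proof.
  intros Ht. pose proof (omega_scale (/ (2 * (1 + t))) t) as H.
  replace (/ (2 * (1 + t)) * t) with (shrink t) in H by (unfold shrink; field; lra).
  assert (Hl : 1 / 4 <= / (2 * (1 + t)) <= 1).
  { split; apply Rmult_le_reg_r with (2 * (1 + t)); try lra;
      rewrite Rinv_l by lra; lra. }
  pose proof (omega_ge0 t ltac:(lra)). specialize (H ltac:(lra) ltac:(lra)). nra.
Qed.

Definition omega_div (u : R) : R := omega u / u.

(* For 0 < u < 1/2, [omega_div u + omega_jac u = omega u / (u (1 - 2u))]: the
   integrand of [int_0^t omega (shrink r) / r dr] after the substitution
   [u = shrink r]. *)
Definition omega_jac (u : R) : R := omega (Rabs u) * (2 / (1 - 2 * u)).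

Lemma omega_div_continuous u : 0 < u -> continuous omega_div u.
Proof.
  intros Hu. apply (continuous_mult omega (fun u => / u)).
  - exact (is_derive_continuous _ _ _ (omega_is_derive u Hu)).
  - apply continuous_Rinv; lra.
Qed.

Lemma omega_jac_continuous u : u < 1 / 2 -> continuous omega_jac u.
Proof.
  intros Hu. apply (continuous_mult (fun u => omega (Rabs u)) (fun u => 2 / (1 - 2 * u))).
  - apply omega_abs_continuous.
  - apply (@ex_derive_continuous R_AbsRing R_NormedModule). auto_derive. lra.
Qed.

Lemma RInt_omega_jac_is_derive x : x < 1 / 2 ->
  is_derive (RInt omega_jac 0) x (omega_jac x).
Proof.
  intros Hx. apply (is_derive_RInt (V := R_NormedModule) omega_jac _ 0 x).
  - apply (locally_interval _ x m_infty (1 / 2)); [exact I | exact Hx|].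
    intros b _ Hb. apply (RInt_correct (V := R_CompleteNormedModule)), ex_RInt_continuous.
    intros z Hz. apply omega_jac_continuous.
    pose proof (Rmax_lub_lt 0 b (1 / 2) ltac:(lra) Hb). lra.
  - apply omega_jac_continuous, Hx.
Qed.

Section Zeta.
Variable I0 : R.
Hypothesis HI : is_RInt_gen omega_div (at_right 0) (at_point 1) I0.

Definition prim0 (x : R) : R := I0 - RInt omega_div x 1 + RInt omega_jac 0 x.

Lemma prim0_is_derive x : 0 < x < 1 / 2 ->
  is_derive prim0 x (omega_div x + omega_jac x).
Proof.
  intros Hx.
  assert (D1 : is_derive (fun a => RInt omega_div a 1) x (- omega_div x)).
  { apply (is_derive_RInt' (V := R_NormedModule) omega_div _ x 1).
    - apply (filter_imp (fun b => 0 < b)); [|apply locally_pos; lra].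
      intros b Hb. apply (RInt_correct (V := R_CompleteNormedModule)), ex_RInt_continuous.
      intros z Hz. apply omega_div_continuous.
      pose proof (Rmin_glb_lt b 1 0 Hb ltac:(lra)). lra.
    - apply omega_div_continuous; lra. }
  pose proof (RInt_omega_jac_is_derive x ltac:(lra)) as D2.
  replace (omega_div x + omega_jac x) with (0 - - omega_div x + omega_jac x) by ring.
  apply (is_derive_plus (fun x => I0 - RInt omega_div x 1)); [|exact D2].
  apply (is_derive_minus (fun _ => I0)); [exact (is_derive_const I0 x) | exact D1].
Qed.

Lemma prim0_small eps : 0 < eps ->
  exists d, 0 < d /\ forall x, 0 < x < d -> Rabs (prim0 x) < eps.
Proof.
  intros He.
  destruct (HI (ball I0 (mkposreal _ (is_pos_div_2 (mkposreal _ He))))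
              (locally_ball _ _)) as [Q Q' [d1 Hd1] HQ' HQQ'].
  assert (Hc : continuous (RInt omega_jac 0) 0)
    by exact (is_derive_continuous _ _ _ (RInt_omega_jac_is_derive 0 ltac:(lra))).
  destruct (proj1 (filterlim_locally _ _) Hc (mkposreal _ (is_pos_div_2 (mkposreal _ He))))
    as [d2 Hd2].
  exists (Rmin d1 d2). split; [apply Rmin_pos; apply cond_pos|].
  intros x Hx. pose proof (Rmin_l d1 d2); pose proof (Rmin_r d1 d2).
  assert (Hx1 : ball 0 d1 x)
    by (change (Rabs (x - 0) < d1); rewrite Rminus_0_r, Rabs_right; lra).
  assert (Hx2 : ball 0 d2 x)
    by (change (Rabs (x - 0) < d2); rewrite Rminus_0_r, Rabs_right; lra).
  destruct (HQQ' x 1 (Hd1 x Hx1 ltac:(lra)) HQ') as [y [Hy Hyb]].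
  specialize (Hd2 x Hx2). simpl in Hy, Hyb, Hd2.
  change (Rabs (y - I0) < eps / 2) in Hyb.
  change (Rabs (RInt omega_jac 0 x - RInt omega_jac 0 0) < eps / 2) in Hd2.
  rewrite RInt_point in Hd2. unfold zero in Hd2; simpl in Hd2.
  unfold prim0. rewrite (is_RInt_unique _ _ _ _ Hy).
  replace (I0 - y + RInt omega_jac 0 x) with (- (y - I0) + (RInt omega_jac 0 x - 0)) by ring.
  eapply Rle_lt_trans; [apply Rabs_triang|]. rewrite Rabs_Ropp. lra.
Qed.

(* [int_0^t omega (shrink r) / r dr]. *)
Definition omega_int (t : R) : R := if Rlt_dec 0 t then prim0 (shrink t) else 0.

Lemma omega_int_is_derive t : 0 < t -> is_derive omega_int t (omega (shrink t) / t).
Proof.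
  intros Ht. pose proof (shrink_bounds t Ht) as Hs.
  pose proof (is_derive_comp _ _ t _ _ (prim0_is_derive _ Hs) (shrink_is_derive t Ht)) as D.
  apply (is_derive_ext_loc (fun y => prim0 (shrink y))).
  { apply (filter_imp (fun y => 0 < y)); [|apply locally_pos, Ht].
    intros y Hy. unfold omega_int. destruct (Rlt_dec 0 y); [reflexivity | lra]. }
  replace (omega (shrink t) / t)
    with (/ (2 * (1 + t) ^ 2) * (omega_div (shrink t) + omega_jac (shrink t))); [exact D|].
  unfold omega_div, omega_jac. rewrite Rabs_right by lra.
  unfold shrink. field. lra.
Qed.

Lemma omega_int_continuity_pt x : 0 <= x -> continuity_pt omega_int x.
Proof.
  intros [Hx | <-].
  - exact (is_derive_continuity_pt _ _ _ (omega_int_is_derive x Hx)).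
  - intros eps He. destruct (prim0_small eps He) as [d [Hd H]].
    exists d. split; [exact Hd|]. intros x [_ Hx]. simpl in Hx |- *. unfold R_dist in *.
    unfold omega_int. destruct (Rlt_dec 0 0); [lra|].
    rewrite Rminus_0_r in *. destruct (Rlt_dec 0 x) as [Hx0|Hx0].
    + pose proof (shrink_bounds x Hx0). apply H.
      rewrite Rabs_right in Hx by lra. unfold shrink in *.
      split; [lra|]. apply Rle_lt_trans with x; [|lra].
      apply Rmult_le_reg_r with (2 * (1 + x)); [lra|].
      unfold Rdiv; rewrite Rmult_assoc, Rinv_l by lra. nra.
    + rewrite Rabs_R0. lra.
Qed.

Variable B : R.

Definition zeta (t : R) : R := B * omega_int t + ln (1 + t).

Definition dzeta (t : R) : R := B * (omega (shrink t) / t) + / (1 + t).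

Definition d2zeta (t : R) : R :=
  B * (Derive omega (shrink t) * / (2 * (1 + t) ^ 2) / t - omega (shrink t) / t ^ 2)
  - / (1 + t) ^ 2.

Definition d3zeta (t : R) : R :=
  B * (Derive (Derive omega) (shrink t) * (/ (2 * (1 + t) ^ 2)) ^ 2 / t
       - Derive omega (shrink t) * / (1 + t) ^ 3 / t
       - 2 * Derive omega (shrink t) * / (2 * (1 + t) ^ 2) / t ^ 2
       + 2 * omega (shrink t) / t ^ 3)
  + 2 / (1 + t) ^ 3.

Ltac derive_side_goal :=
  match goal with
  | |- ex_derive (fun x => Derive omega x) ?y =>
      exists (Derive (Derive omega) y); apply Domega_is_derive; lra
  | |- ex_derive (fun x => omega x) ?y => exists (Derive omega y); apply omega_is_derive; lra
  | |- _ <> 0 => apply Rgt_not_eq; unfold Rgt; repeat apply Rmult_lt_0_compat; lra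
  end.

Lemma zeta0 : zeta 0 = 0.
Proof.
  unfold zeta, omega_int. destruct (Rlt_dec 0 0); [lra|].
  rewrite Rplus_0_r, ln_1. ring.
Qed.

Lemma zeta_is_derive t : 0 < t -> is_derive zeta t (dzeta t).
Proof.
  intros Ht. apply (is_derive_plus (fun t => B * omega_int t) (fun t => ln (1 + t))).
  - apply (is_derive_scal omega_int), omega_int_is_derive, Ht.
  - auto_derive; [lra | ring].
Qed.

Lemma dzeta_is_derive t : 0 < t -> is_derive dzeta t (d2zeta t).
Proof.
  intros Ht. pose proof (shrink_bounds t Ht). unfold dzeta, d2zeta, shrink.
  auto_derive; change (t * / (2 * (1 + t))) with (shrink t).
  - repeat split; derive_side_goal.
  - change (t / (2 * (1 + t))) with (shrink t).
    change (Derive (fun x => omega x)) with (Derive omega).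
    field. lra.
Qed.

Lemma d2zeta_is_derive t : 0 < t -> is_derive d2zeta t (d3zeta t).
Proof.
  intros Ht. pose proof (shrink_bounds t Ht). unfold d2zeta, d3zeta, shrink.
  auto_derive; change (t * / (2 * (1 + t))) with (shrink t).
  - repeat split; derive_side_goal.
  - change (t / (2 * (1 + t))) with (shrink t).
    change (Derive (fun x => omega x)) with (Derive omega).
    change (Derive (fun x => Derive omega x)) with (Derive (Derive omega)).
    field. lra.
Qed.

Lemma d3zeta_continuous t : 0 < t -> continuous d3zeta t.
Proof.
  intros Ht. pose proof (shrink_bounds t Ht).
  set (P := fun t => B * (/ (2 * (1 + t) ^ 2)) ^ 2 / t).
  set (Q := fun t => B * (- Derive omega (shrink t) * / (1 + t) ^ 3 / t
       - 2 * Derive omega (shrink t) * / (2 * (1 + t) ^ 2) / t ^ 2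
       + 2 * omega (shrink t) / t ^ 3) + 2 / (1 + t) ^ 3).
  apply (continuous_ext (fun t => Derive (Derive omega) (shrink t) * P t + Q t)).
  { intros x. change (Derive (Derive omega) (shrink x) * P x + Q x = d3zeta x :> R).
    unfold d3zeta, P, Q, Rdiv. ring. }
  apply (continuous_plus (fun t => Derive (Derive omega) (shrink t) * P t) Q).
  - apply (continuous_mult (fun t => Derive (Derive omega) (shrink t)) P).
    + apply (continuous_comp shrink (Derive (Derive omega))).
      * exact (is_derive_continuous _ _ _ (shrink_is_derive t Ht)).
      * apply D2omega_continuous; lra.
    + apply (@ex_derive_continuous R_AbsRing R_NormedModule). unfold P. auto_derive. nra.
  - apply (@ex_derive_continuous R_AbsRing R_NormedModule). unfold Q, shrink.
    auto_derive. change (t * / (2 * (1 + t))) with (shrink t).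
    repeat split; derive_side_goal.
Qed.

Hypothesis HB : 0 <= B.

Lemma zeta_continuity_pt x : 0 <= x -> continuity_pt zeta x.
Proof.
  intros Hx. apply continuity_pt_plus.
  - apply continuity_pt_scal, omega_int_continuity_pt, Hx.
  - apply (is_derive_continuity_pt _ _ (/ (1 + x))). auto_derive; [lra | ring].
Qed.

Lemma dzeta_pos t : 0 < t -> 0 < dzeta t.
Proof.
  intros Ht. unfold dzeta. pose proof (shrink_bounds t Ht).
  assert (0 <= omega (shrink t) / t) by (apply Rdiv_le_0_compat, Ht; apply omega_ge0; lra).
  assert (0 < / (1 + t)) by (apply Rinv_0_lt_compat; lra). nra.
Qed.

Lemma dzeta_decr x y : 0 < x -> x < y -> dzeta y < dzeta x.
Proof.
  intros Hx Hxy. unfold dzeta.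
  assert (Hr : forall t, 0 < t ->
            omega (shrink t) / t = omega (shrink t) / shrink t * / (2 * (1 + t)))
    by (intros t Ht; unfold shrink; field; lra).
  rewrite !Hr by lra.
  pose proof (shrink_bounds x Hx); pose proof (shrink_bounds y ltac:(lra)).
  assert (omega (shrink y) / shrink y <= omega (shrink x) / shrink x)
    by (apply omega_ratio_le, shrink_le; lra).
  assert (0 <= omega (shrink y) / shrink y) by (apply Rdiv_le_0_compat; [apply omega_ge0|]; lra).
  assert (/ (2 * (1 + y)) <= / (2 * (1 + x))) by (apply Rinv_le_contravar; lra).
  assert (/ (1 + y) < / (1 + x)) by (apply Rinv_lt_contravar; nra).
  assert (0 < / (2 * (1 + y))) by (apply Rinv_0_lt_compat; lra).
  assert (Hprod : omega (shrink y) / shrink y * / (2 * (1 + y))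
                  <= omega (shrink x) / shrink x * / (2 * (1 + x))) by nra.
  pose proof (Rmult_le_compat_l B _ _ HB Hprod). lra.
Qed.

Lemma zeta_strict_concave x y l : 0 <= x -> x < y -> 0 < l < 1 ->
  l * zeta x + (1 - l) * zeta y < zeta (l * x + (1 - l) * y).
Proof.
  apply (strict_concave_of_derive_decr zeta dzeta);
    [exact zeta_is_derive | exact dzeta_decr | exact zeta_continuity_pt].
Qed.

Lemma zeta_concave : concave_on_nonneg zeta.
Proof.
  intros x y l Hx Hy Hl.
  destruct (Req_dec l 0) as [->|Hl0]; [replace (0 * x + (1 - 0) * y) with y by ring; lra|].
  destruct (Req_dec l 1) as [->|Hl1]; [replace (1 * x + (1 - 1) * y) with x by ring; lra|].
  destruct (Rtotal_order x y) as [Hxy | [<- | Hxy]].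
  - left. apply zeta_strict_concave; lra.
  - replace (l * x + (1 - l) * x) with x by ring. lra.
  - left. pose proof (zeta_strict_concave y x (1 - l) Hy Hxy ltac:(lra)) as H.
    replace ((1 - l) * y + (1 - (1 - l)) * x) with (l * x + (1 - l) * y) in H by ring. lra.
Qed.

Lemma zeta_incr : incr_on_nonneg zeta.
Proof.
  intros x y Hx Hxy. apply (lt_of_derive_pos zeta dzeta x y Hxy).
  - intros u Hu; apply zeta_is_derive; lra.
  - intros u Hu; apply dzeta_pos; lra.
  - intros u Hu; apply zeta_continuity_pt; lra.
Qed.

Lemma zeta_ge0 t : 0 <= t -> 0 <= zeta t.
Proof.
  intros [Ht | <-]; [|rewrite zeta0; lra].
  rewrite <- zeta0. left. apply zeta_incr; lra.
Qed.

Lemma zeta_condZ0 : condZ0 zeta.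
Proof.
  split; [|exact (conj zeta_incr (conj zeta_concave zeta0))].
  intros t Ht. rewrite <- zeta0. apply zeta_incr; lra.
Qed.

Lemma Derive_zeta t : 0 < t -> Derive zeta t = dzeta t.
Proof. intros Ht. apply is_derive_unique, zeta_is_derive, Ht. Qed.

Lemma Derive_n_zeta t : 0 < t ->
  Derive_n zeta 1 t = dzeta t /\ Derive_n zeta 2 t = d2zeta t /\ Derive_n zeta 3 t = d3zeta t
  /\ ex_derive_n zeta 3 t.
Proof.
  intros Ht.
  assert (D1 : forall y, 0 < y -> Derive_n zeta 1 y = dzeta y) by exact Derive_zeta.
  assert (E2 : forall y, 0 < y -> is_derive (Derive_n zeta 1) y (d2zeta y))
    by (intros y Hy; apply (is_derive_Derive_n _ _ _ _ _ D1 Hy), dzeta_is_derive, Hy).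
  assert (D2 : forall y, 0 < y -> Derive_n zeta 2 y = d2zeta y)
    by (intros y Hy; apply is_derive_unique, E2, Hy).
  assert (E3 : is_derive (Derive_n zeta 2) t (d3zeta t))
    by (apply (is_derive_Derive_n _ _ _ _ _ D2 Ht), d2zeta_is_derive, Ht).
  repeat split; [apply D1, Ht | apply D2, Ht | apply is_derive_unique, E3 | now exists (d3zeta t)].
Qed.

Lemma zeta_C3 : Cn_on 3 (fun t => 0 < t) zeta.
Proof.
  intros t Ht. split.
  - intros k Hk. destruct (Derive_n_zeta t Ht) as (_&_&_&H3).
    destruct k as [|[|[|[|k]]]]; [exact I | | | exact H3 | lia]; simpl.
    + exists (dzeta t). apply zeta_is_derive, Ht.
    + exists (d2zeta t).
      apply (is_derive_Derive_n zeta dzeta 1); [intros y Hy; apply Derive_n_zeta, Hy | exact Ht |].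
      apply dzeta_is_derive, Ht.
  - apply (continuous_ext_loc _ d3zeta); [|apply d3zeta_continuous, Ht].
    apply (filter_imp (fun y => 0 < y)); [|apply locally_pos, Ht].
    intros y Hy. symmetry. apply Derive_n_zeta, Hy.
Qed.

Lemma zeta_condZ1 : condZ1 zeta.
Proof.
  destruct Hom as (_&_&_&_&_&_&_&t0&Ht0&_&Hsec).
  pose proof (Rmin_l (1 / 2) t0); pose proof (Rmin_r (1 / 2) t0).
  exists 6, (Rmin (1 / 2) t0). split; [lra|]. split; [split; [apply Rmin_pos|]; lra|].
  intros t Ht. destruct (Derive_n_zeta t ltac:(lra)) as (_&_&->&_).
  rewrite Derive_zeta by lra. unfold d3zeta, dzeta.
  pose proof (shrink_bounds t ltac:(lra)) as Hs.
  assert (Hst : shrink t < t0).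
  { apply Rle_lt_trans with t; [|lra]. unfold shrink.
    apply Rmult_le_reg_r with (2 * (1 + t)); [lra|].
    unfold Rdiv. rewrite Rmult_assoc, Rinv_l by lra. nra. }
  specialize (Hsec (shrink t) ltac:(lra)). simpl in Hsec.
  pose proof (omega_ge0 (shrink t) ltac:(lra)).
  pose proof (Domega_ge0 (shrink t) ltac:(lra)).
  pose proof (mul_Domega_le (shrink t) ltac:(lra)).
  set (a := omega (shrink t)) in *. set (b := Derive omega (shrink t)) in *.
  set (c := Derive (Derive omega) (shrink t)) in *. set (y := shrink t) in *.
  (* After clearing denominators, the third-order part is controlled by the
     second-order condition (M) together with [0 <= y omega'(y) <= omega(y)]. *)
  set (N := y ^ 2 * c - 2 * (y * b) * t - 2 * (y * b) * (1 + t) + 8 * a * (1 + t) ^ 2).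
  assert (HN : 0 <= N) by (unfold N; nra).
  assert (E : t ^ 2 * (B * (c * (/ (2 * (1 + t) ^ 2)) ^ 2 / t - b * / (1 + t) ^ 3 / t
                 - 2 * b * / (2 * (1 + t) ^ 2) / t ^ 2 + 2 * a / t ^ 3) + 2 / (1 + t) ^ 3)
              + 6 * (B * (a / t) + / (1 + t))
              = B * (N / ((1 + t) ^ 2 * t)) + 2 * t ^ 2 / (1 + t) ^ 3 + 6 / (1 + t)).
  { unfold N, y, shrink. field. lra. }
  assert (0 <= N / ((1 + t) ^ 2 * t)) by (apply Rdiv_le_0_compat; nra).
  assert (0 <= 2 * t ^ 2 / (1 + t) ^ 3) by (apply Rdiv_le_0_compat; nra).
  assert (0 < 6 / (1 + t)) by (apply Rdiv_lt_0_compat; lra).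
  assert (0 <= B * (N / ((1 + t) ^ 2 * t))) by (apply Rmult_le_pos; lra).
  lra.
Qed.

Lemma zeta_condZ2 : condZ2 zeta.
Proof.
  intros x y Hx Hxy. rewrite !Derive_zeta by lra.
  assert (E : forall u, 0 < u -> u * dzeta u = B * omega (shrink u) + u / (1 + u))
    by (intros u Hu; unfold dzeta; field; lra).
  rewrite !E by lra.
  pose proof (shrink_bounds x Hx).
  pose proof (omega_le (shrink x) (shrink y) ltac:(lra) (shrink_le x y Hx Hxy)).
  assert (x / (1 + x) <= y / (1 + y)).
  { apply Rmult_le_reg_r with ((1 + x) * (1 + y)); [nra|].
    replace (x / (1 + x) * ((1 + x) * (1 + y))) with (x * (1 + y)) by (field; lra).
    replace (y / (1 + y) * ((1 + x) * (1 + y))) with (y * (1 + x)) by (field; lra). nra. }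
  nra.
Qed.

(* (Z3) only asks for some exponent: with exponent 1 it is the strict
   concavity of zeta through [zeta 0 = 0]. *)
Lemma zeta_condZ3 : condZ3 zeta.
Proof.
  exists 1, 1. split; [lra|]. split; [lra|]. intros x y Hx Hxy Hy.
  rewrite !Rpower_1 by lra.
  assert (Hl : 0 < x / y < 1).
  { split; [apply Rdiv_lt_0_compat; lra|].
    apply Rmult_lt_reg_r with y; [lra|]. replace (x / y * y) with x by (field; lra). lra. }
  pose proof (zeta_strict_concave 0 y (1 - x / y) (Rle_refl 0) ltac:(lra) ltac:(lra)) as H.
  rewrite zeta0 in H.
  replace ((1 - x / y) * 0 + (1 - (1 - x / y)) * y) with x in H by (field; lra).
  apply Rmult_lt_reg_r with x; [exact Hx|].
  replace (zeta x / x * x) with (zeta x) by (field; lra).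
  replace (zeta y / y * x) with ((1 - (1 - x / y)) * zeta y) by (field; lra). lra.
Qed.

Lemma zeta_log_growth t : 1 <= t ->
  zeta t <= zeta 1 + (B * omega (1 / 2) + 1) * ln (1 + t).
Proof.
  intros Ht. set (K := B * omega (1 / 2) + 1).
  assert (HK : 1 <= K).
  { assert (0 <= B * omega (1 / 2)) by (apply Rmult_le_pos; [|apply omega_ge0]; lra).
    unfold K; lra. }
  assert (Hln : ln t <= ln (1 + t)) by (apply ln_le; lra).
  assert (0 <= ln t) by (rewrite <- ln_1; apply ln_le; lra).
  destruct Ht as [Ht | <-]; [|nra].
  assert (Hinc : zeta t - zeta 1 <= K * ln t - K * ln 1).
  { apply (increment_le_of_derive_le zeta (fun x => K * ln x) dzeta (fun x => K / x) 1 t Ht).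
    - intros x Hx. apply zeta_is_derive; lra.
    - intros x Hx. auto_derive; [lra | field; lra].
    - intros x Hx. pose proof (shrink_bounds x ltac:(lra)).
      assert (omega (shrink x) <= omega (1 / 2)) by (apply omega_le; lra).
      assert (Hw : omega (shrink x) / x <= omega (1 / 2) / x)
        by (apply Rmult_le_compat_r; [left; apply Rinv_0_lt_compat|]; lra).
      assert (/ (1 + x) <= / x) by (apply Rinv_le_contravar; lra).
      pose proof (Rmult_le_compat_l B _ _ HB Hw).
      unfold dzeta, K. replace ((B * omega (1 / 2) + 1) / x)
        with (B * (omega (1 / 2) / x) + / x) by (field; lra). lra.
    - intros x Hx. apply zeta_continuity_pt; lra.
    - intros x Hx. apply (is_derive_continuity_pt _ _ (K / x)). auto_derive; [lra | field; lra]. }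
  rewrite ln_1 in Hinc. nra.
Qed.

Lemma zeta_condZ4 s : 0 < s -> condZ4 s zeta.
Proof.
  intros Hs. set (K := B * omega (1 / 2) + 1).
  assert (HK : 1 <= K).
  { assert (0 <= B * omega (1 / 2)) by (apply Rmult_le_pos; [|apply omega_ge0]; lra).
    unfold K; lra. }
  pose proof (zeta_ge0 1 ltac:(lra)).
  exists (zeta 1 + K * (2 / s)).
  split; [assert (0 < 2 / s) by (apply Rdiv_lt_0_compat; lra); nra|].
  intros t Ht.
  assert (Hp : 1 <= Rpower (1 + t) (s / 2)).
  { pose proof (Rle_Rpower (1 + t) 0 (s / 2) ltac:(lra) ltac:(lra)) as Hp.
    rewrite Rpower_O in Hp by lra. exact Hp. }
  assert (Hln : ln (1 + t) <= Rpower (1 + t) (s / 2) / (s / 2))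
    by (apply ln_le_Rpower_div; lra).
  replace (Rpower (1 + t) (s / 2) / (s / 2)) with (2 / s * Rpower (1 + t) (s / 2))
    in Hln by (field; lra).
  assert (Hz : zeta t <= zeta 1 + K * ln (1 + t)).
  { destruct (Rle_or_lt 1 t) as [H1|H1]; [apply zeta_log_growth, H1|].
    assert (0 <= ln (1 + t)) by (rewrite <- ln_1; apply ln_le; lra).
    destruct Ht as [Ht | <-]; [|rewrite zeta0; nra].
    assert (zeta t < zeta 1) by (apply zeta_incr; lra). nra. }
  assert (K * ln (1 + t) <= K * (2 / s * Rpower (1 + t) (s / 2))) by (apply Rmult_le_compat_l; lra).
  nra.
Qed.

(* Near 0, [t^s <= t^iota <= omega t / m], and [omega t <= 4 omega (shrink t)]
   while [t * dzeta t >= B * omega (shrink t)]. *)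
Lemma zeta_dominates (s C m t1 : R) : 0 < C -> 0 < m -> iota < s ->
  (forall t, 0 < t < t1 -> m * Rpower t iota < omega t) ->
  B = 4 * C * (/ m + 1) ->
  forall t, 0 < t < Rmin t1 1 -> C * (Rpower t s + omega t) <= t * Derive zeta t.
Proof.
  intros HC Hm His Hbd HBdef t Ht. pose proof (Rmin_l t1 1); pose proof (Rmin_r t1 1).
  rewrite Derive_zeta by lra.
  replace (t * dzeta t) with (B * omega (shrink t) + t / (1 + t)) by (unfold dzeta; field; lra).
  assert (0 <= t / (1 + t)) by (apply Rdiv_le_0_compat; lra).
  pose proof (omega_le_4_omega_shrink t ltac:(lra)).
  pose proof (omega_ge0 t ltac:(lra)).
  assert (Hp : Rpower t s <= Rpower t iota) by (apply Rpower_le_of_exponent_ge; lra).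
  specialize (Hbd t ltac:(lra)).
  assert (Hp' : Rpower t s <= omega t / m).
  { apply Rmult_le_reg_r with m; [exact Hm|].
    replace (omega t / m * m) with (omega t) by (field; lra). nra. }
  assert (Hinv : 0 < / m) by (apply Rinv_0_lt_compat, Hm).
  replace (omega t / m) with (/ m * omega t) in Hp' by (field; lra).
  subst B. nra.
Qed.
End Zeta.
End Construction.

Theorem lemma5p6 (s iota : R) (omega : R -> R) (C : R) :
  0 < s < 1 ->
  0 < iota -> iota < Rmin s (1 / 3) ->
  condM iota omega ->
  0 < C ->
  exists (t0 : R) (zeta : R -> R),
    0 < t0 /\
    (forall t, 0 <= t -> 0 <= zeta t) /\
    cont_on_nonneg zeta /\
    Cn_on 2 (fun t => 0 < t) zeta /\
    Cn_on 3 (fun t => 0 < t < 2) zeta /\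
    condZ0 zeta /\ condZ1 zeta /\ condZ2 zeta /\ condZ3 zeta /\ condZ4 s zeta /\
    (forall t, 0 < t < t0 -> C * (Rpower t s + omega t) <= t * Derive zeta t).
Proof.
  intros Hs Hiota Hiota_lt HM HC.
  assert (His : iota < s) by (pose proof (Rmin_l s (1 / 3)); lra).
  pose proof HM as (_&_&_&_&_&_&[I0 HI]&_).
  destruct (omega_ge_power_near0 iota omega HM) as (m & t1 & Hm & Ht1 & Hbd).
  set (B := 4 * C * (/ m + 1)).
  assert (HB : 0 <= B) by (pose proof (Rinv_0_lt_compat m Hm); unfold B; nra).
  assert (HC3 : Cn_on 3 (fun t => 0 < t) (zeta omega I0 B)) by (eapply zeta_C3; eauto).
  exists (Rmin t1 1), (zeta omega I0 B).
  refine (conj _ (conj _ (conj _ (conj _ (conj _ (conj _ (conj _ (conj _ (conj _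
            (conj _ _))))))))));
    [apply Rmin_pos; lra | eapply zeta_ge0; eauto
    | apply cont_on_nonneg_of_continuity_pt; eapply zeta_continuity_pt; eauto
    | apply Cn_on_pred, HC3 | apply (Cn_on_sub 3 (fun t => 0 < t)); [intros t Ht; lra | exact HC3]
    | eapply zeta_condZ0; eauto | eapply zeta_condZ1; eauto | eapply zeta_condZ2; eauto
    | eapply zeta_condZ3; eauto | eapply zeta_condZ4; eauto; lra
    | eapply zeta_dominates with (m := m) (t1 := t1); eauto].
Qed.
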